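(* Let $m\ge 1$ be an integer and let $(h(n))_{n\ge 1}$ be the non-decreasing sequence of non-negative integers with $h(1)=0$ in which, for each integer $k\ge 0$, the value $k$ appears exactly $mk+1$ times. For $k\ge 0$ let $T^{\star}_k = 1 + m\binom{k}{2} + k$ (so $h(n)=k$ if and only if $T^{\star}_k\le n<T^{\star}_{k+1}$), and let $a_{\mathrm{sol}}(n) = n - h(n)$ for $n\ge1$. Then: (1) For every $k\ge 0$: $h\big(a_{\mathrm{sol}}^{(j)}(T^{\star}_{k+1}-1)\big) = k$ for all $0\le j\le m$, and $a_{\mathrm{sol}}^{(m)}(T^{\star}_{k+1}-1) = T^{\star}_k$. (2) For every $k\ge 1$: $h\big(a_{\mathrm{sol}}^{(j)}(T^{\star}_{k})\big) = k-1$ for all $1\le j\le m$, and $a_{\mathrm{sol}}^{(m)}(T^{\star}_{k}) = T^{\star}_{k-1}$.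
   Context: Iterates are defined by $f^{(0)}(n)=n$ and $f^{(j+1)}(n)=f(f^{(j)}(n))$. *)

From mathcomp Require Import all_boot.
Set Implicit Arguments. Unset Strict Implicit. Unset Printing Implicit Defensive.

Definition hseq (m N : nat) : seq nat :=
  flatten [seq nseq (m * k + 1) k | k <- iota 0 N].

(* The first n blocks already
   have total length >= n, so index n-1 is within range. *)
Definition h (m n : nat) : nat := nth 0 (hseq m n) n.-1.

Definition Tstar (m k : nat) : nat := 1 + m * 'C(k, 2) + k.

Definition asol (m n : nat) : nat := n - h m n.

From mathcomp Require Import all_boot.
From mathcomp Require Import zify.
Set Implicit Arguments. Unset Strict Implicit. Unset Printing Implicit Defensive.

(* The block [T*_k, T*_(k+1)) has length m k + 1 and h is constantly k on it,
   so a_sol moves down by exactly k inside it: m steps from its top element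
   T*_(k+1) - 1 land on its bottom element T*_k.  At T*_(k+1) the value of h
   jumps by one, so a_sol(T*_(k+1)) = a_sol(T*_(k+1) - 1) and part (2) reduces
   to part (1). *)

Lemma hseqD m a b :
  hseq m (a + b) = hseq m a ++ flatten [seq nseq (m * k + 1) k | k <- iota a b].
Proof. by rewrite /hseq iotaD map_cat flatten_cat add0n. Qed.

Lemma hseqS m k : hseq m k.+1 = hseq m k ++ nseq (m * k + 1) k.
Proof. by rewrite -addn1 hseqD /= cats0. Qed.

Lemma TstarS m k : Tstar m k.+1 = Tstar m k + m * k + 1.
Proof. by rewrite /Tstar binS bin1 mulnDr; lia. Qed.

Lemma size_hseq m k : size (hseq m k) = (Tstar m k).-1.
Proof.
elim: k => [|k IHk]; first by rewrite /Tstar bin0n muln0.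
by rewrite hseqS size_cat size_nseq IHk TstarS /Tstar; lia.
Qed.

Lemma nth_hseq_le m N n i :
  N <= n -> i < size (hseq m N) -> nth 0 (hseq m n) i = nth 0 (hseq m N) i.
Proof. by move=> /subnKC <- lt_i; rewrite hseqD nth_cat lt_i. Qed.

Lemma h_block m k n : Tstar m k <= n < Tstar m k.+1 -> h m n = k.
Proof.
move=> /andP[ge_n lt_n].
have lt_kn : k < n by move: ge_n; rewrite /Tstar; lia.
have lt_top : n.-1 < size (hseq m k.+1) by rewrite size_hseq; lia.
rewrite /h (nth_hseq_le lt_kn lt_top) hseqS nth_cat size_hseq.
have -> : (n.-1 < (Tstar m k).-1) = false by lia.
have lt_blk : n.-1 - (Tstar m k).-1 < m * k + 1 by move: lt_n; rewrite TstarS; lia.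
by rewrite nth_nseq lt_blk.
Qed.

Lemma iter_asol_block m k n j :
  Tstar m k <= n - j * k -> n < Tstar m k.+1 -> iter j (asol m) n = n - j * k.
Proof.
move=> ge_n lt_n; elim: j ge_n => [|j IHj] ge_n; first by rewrite subn0.
have ge_n' : Tstar m k <= n - j * k by move: ge_n; rewrite mulSn; lia.
by rewrite iterS IHj // /asol (@h_block _ k) ?mulSn; lia.
Qed.

Lemma iter_asol_top m k j : j <= m ->
  iter j (asol m) (Tstar m k.+1 - 1) = Tstar m k.+1 - 1 - j * k.
Proof.
move=> le_jm; have le_jk := leq_mul le_jm (leqnn k).
by apply: iter_asol_block; rewrite TstarS; lia.
Qed.

Lemma h_iter_asol_top m k j : j <= m ->
  h m (iter j (asol m) (Tstar m k.+1 - 1)) = k.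
Proof.
move=> le_jm; have le_jk := leq_mul le_jm (leqnn k).
by rewrite iter_asol_top //; apply: h_block; rewrite TstarS; lia.
Qed.

Lemma iter_asol_Tstar_top m k : iter m (asol m) (Tstar m k.+1 - 1) = Tstar m k.
Proof. by rewrite iter_asol_top // TstarS; lia. Qed.

Lemma asol_Tstar m k : asol m (Tstar m k.+1) = asol m (Tstar m k.+1 - 1).
Proof.
by rewrite /asol (@h_block _ k.+1) ?(@h_block _ k) !TstarS; lia.
Qed.

Lemma iterS_asol_Tstar m k j :
  iter j.+1 (asol m) (Tstar m k.+1) = iter j.+1 (asol m) (Tstar m k.+1 - 1).
Proof. by rewrite !iterSr asol_Tstar. Qed.

Theorem mainTheorem3 (m : nat) (hm : 1 <= m) :
  (forall k : nat,
      (forall j : nat, j <= m ->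
         h m (iter j (asol m) (Tstar m k.+1 - 1)) = k)
      /\ iter m (asol m) (Tstar m k.+1 - 1) = Tstar m k)
  /\
  (forall k : nat, 1 <= k ->
      (forall j : nat, 1 <= j <= m ->
         h m (iter j (asol m) (Tstar m k)) = k.-1)
      /\ iter m (asol m) (Tstar m k) = Tstar m k.-1).
Proof.
split=> [k | [//|k] _].
  by split=> [j|]; [exact: h_iter_asol_top | exact: iter_asol_Tstar_top].
split=> [[//|j] /andP[_ le_jm] |].
  by rewrite iterS_asol_Tstar h_iter_asol_top.
by case: m hm => [//|m] _; rewrite iterS_asol_Tstar iter_asol_Tstar_top.
Qed.
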